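(* Let $Q_{\mathcal D}(w,x,y,z)=2(w^2+x^2+y^2+z^2)-(w+x+y+z)^2$ and $Q_{\mathcal L}(W,X,Y,Z)=-W^2+X^2+Y^2+Z^2$, and let $$\mathbf J_0=\frac12\begin{pmatrix}1&1&1&1\\1&1&-1&-1\\1&-1&1&-1\\1&-1&-1&1\end{pmatrix}.$$ For each $r\in\mathbb R$, the map $(W,X,Y,Z)^T=\mathbf J_0(w,x,y,z)^T$ is a bijection between real solutions of $Q_{\mathcal D}(w,x,y,z)=4r$ and real solutions of $Q_{\mathcal L}(W,X,Y,Z)=2r$, and it preserves the Euclidean height $H$. When $r=m\in\mathbb Z$, this map restricts to a bijection between integer solutions of $Q_{\mathcal D}(w,x,y,z)=4m$ and integer solutions of $Q_{\mathcal L}(W,X,Y,Z)=2m$. In particular, for all integers $m$ and all $T>0$, $N_{\mathcal D}(4m,T)=N_{\mathcal L}(2m,T)$.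
   Context: The Euclidean height of a real quadruple $\mathbf v=(w,x,y,z)$ is $H(\mathbf v)=(w^2+x^2+y^2+z^2)^{1/2}$. $N_{\mathcal D}(k,T)$ denotes the number of integer quadruples $\mathbf v$ with $Q_{\mathcal D}(\mathbf v)=k$ and $H(\mathbf v)\le T$; $N_{\mathcal L}(k,T)$ denotes the number of integer quadruples $\mathbf v$ with $Q_{\mathcal L}(\mathbf v)=k$ and $H(\mathbf v)\le T$. *)

From Stdlib Require Import Reals Lra Lia ZArith List.
Open Scope R_scope.

Definition R4 : Type := (R * R * R * R)%type.
Definition Z4 : Type := (Z * Z * Z * Z)%type.

Definition QD (v : R4) : R :=
  let '(w, x, y, z) := v in
  2 * (w^2 + x^2 + y^2 + z^2) - (w + x + y + z)^2.

Definition QL (v : R4) : R :=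
  let '(W, X, Y, Z) := v in
  - W^2 + X^2 + Y^2 + Z^2.

Definition H (v : R4) : R :=
  let '(w, x, y, z) := v in sqrt (w^2 + x^2 + y^2 + z^2).

Definition J0 (v : R4) : R4 :=
  let '(w, x, y, z) := v in
  ( (1/2) * (w + x + y + z),
    (1/2) * (w + x - y - z),
    (1/2) * (w - x + y - z),
    (1/2) * (w - x - y + z) ).

Definition bij_between {T U : Type} (A : T -> Prop) (B : U -> Prop) (f : T -> U) : Prop :=
  (forall x, A x -> B (f x)) /\
  (forall x1 x2, A x1 -> A x2 -> f x1 = f x2 -> x1 = x2) /\
  (forall y, B y -> exists x, A x /\ f x = y).

Definition toR4 (v : Z4) : R4 :=
  let '(a, b, c, d) := v in (IZR a, IZR b, IZR c, IZR d).
Definition is_int4 (v : R4) : Prop := exists u : Z4, v = toR4 u.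

(* Counting functions N_D(k,T), N_L(k,T): number of integer quadruples v with
   Q(v) = k and H(v) <= T.  Every such v has all coordinates of absolute value
   <= |T| < |up T|, so it suffices to enumerate the box [-K,K]^4, K = |up T|. *)
Definition box_coords (T : R) : list Z :=
  let K := Z.abs (up T) in
  map (fun i => (Z.of_nat i - K)%Z) (seq 0 (Z.to_nat (2 * K + 1))).

Definition box (T : R) : list Z4 :=
  let c := box_coords T in
  flat_map (fun a => flat_map (fun b => flat_map (fun d => map (fun e => (a, b, d, e)) c) c) c) c.

Definition count_sol (Q : R4 -> R) (k : Z) (T : R) : nat :=
  length (filter (fun u => if Req_EM_T (Q (toR4 u)) (IZR k) then
                             if Rle_dec (H (toR4 u)) T then true else false
                           else false) (box T)).

Definition N_D (k : Z) (T : R) : nat := count_sol QD k T.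
Definition N_L (k : Z) (T : R) : nat := count_sol QL k T.

(** [J0] is symmetric and orthogonal, hence an involutive isometry of R^4, and
    [QL (J0 v) = QD v / 2]; so it exchanges the two level sets and preserves [H].
    For an integer point with coordinate sum [s], [J0] is integral exactly when [s]
    is even, and both equations force this: [QD = 2 (sum of squares) - s^2] and
    [QL + 2 (sum of products) + 2 a^2 = s^2].  Hence [J0] also exchanges the integer
    solutions, and since it preserves [H] it matches the solutions counted by [N_D]
    and [N_L] one to one. *)
From Stdlib Require Import Reals ZArith.
From Stdlib Require Import Lra Lia List.
Open Scope R_scope.

Lemma involution_bij_between {T : Type} (A B : T -> Prop) (f : T -> T) :
  (forall x, f (f x) = x) ->
  (forall x, A x -> B (f x)) -> (forall y, B y -> A (f y)) ->
  bij_between A B f.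
Proof.
  intros ff AB BA; split; [exact AB | split].
  - intros x1 x2 _ _ E. now rewrite <- (ff x1), <- (ff x2), E.
  - intros y By. exists (f y). split; [now apply BA | apply ff].
Qed.

Lemma J0K v : J0 (J0 v) = v.
Proof. destruct v as [[[w x] y] z]; simpl; repeat f_equal; field. Qed.

Lemma QL_J0 v : QL (J0 v) = QD v / 2.
Proof. destruct v as [[[w x] y] z]; simpl; field. Qed.

Lemma QD_J0 v : QD (J0 v) = 2 * QL v.
Proof. destruct v as [[[w x] y] z]; simpl; field. Qed.

Lemma H_J0 v : H (J0 v) = H v.
Proof. destruct v as [[[w x] y] z]; simpl; f_equal; field. Qed.

Lemma bij_between_J0 r :
  bij_between (fun v => QD v = 4 * r) (fun v => QL v = 2 * r) J0.
Proof.
  apply involution_bij_between; [exact J0K | |]; intros v Hv.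
  - rewrite QL_J0, Hv; field.
  - rewrite QD_J0, Hv; ring.
Qed.

Definition sum4 (u : Z4) : Z := let '(a, b, c, d) := u in (a + b + c + d)%Z.

Definition J0Z (u : Z4) : Z4 :=
  let '(_, b, c, d) := u in
  let k := (sum4 u / 2)%Z in (k, k - c - d, k - b - d, k - b - c)%Z.

Definition QDZ (u : Z4) : Z :=
  let '(a, b, c, d) := u in
  (2 * (a * a + b * b + c * c + d * d) - (a + b + c + d) * (a + b + c + d))%Z.

Definition QLZ (u : Z4) : Z :=
  let '(a, b, c, d) := u in (- (a * a) + b * b + c * c + d * d)%Z.

Lemma toR4_inj u1 u2 : toR4 u1 = toR4 u2 -> u1 = u2.
Proof.
  destruct u1 as [[[a b] c] d], u2 as [[[a' b'] c'] d']; simpl; intro E.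
  injection E; intros; repeat f_equal; now apply eq_IZR.
Qed.

Lemma toR4_J0Z u : Z.Even (sum4 u) -> toR4 (J0Z u) = J0 (toR4 u).
Proof.
  intros [k Hk]; unfold J0Z; rewrite Hk, Z.mul_comm, Z.div_mul by lia.
  destruct u as [[[a b] c] d]; simpl in Hk |- *.
  assert (Hs : IZR a + IZR b + IZR c + IZR d = 2 * IZR k).
  { rewrite <- !plus_IZR, <- mult_IZR. now f_equal. }
  repeat f_equal; rewrite ?minus_IZR; lra.
Qed.

Lemma is_int4_J0 u : Z.Even (sum4 u) -> is_int4 (J0 (toR4 u)).
Proof. intro Hs. exists (J0Z u). now rewrite toR4_J0Z. Qed.

Lemma QD_toR4 u : QD (toR4 u) = IZR (QDZ u).
Proof.
  destruct u as [[[a b] c] d]; unfold QD, QDZ, toR4.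
  rewrite minus_IZR, !mult_IZR, !plus_IZR, !mult_IZR; ring.
Qed.

Lemma QL_toR4 u : QL (toR4 u) = IZR (QLZ u).
Proof.
  destruct u as [[[a b] c] d]; unfold QL, QLZ, toR4.
  rewrite !plus_IZR, opp_IZR, !mult_IZR; ring.
Qed.

Lemma Z_Even_of_Even_square s : Z.Even (s * s) -> Z.Even s.
Proof. rewrite <- !Z.even_spec, Z.even_mul. now destruct (Z.even s). Qed.

Lemma Even_sum4_of_QD u m : QD (toR4 u) = 4 * IZR m -> Z.Even (sum4 u).
Proof.
  rewrite QD_toR4, <- mult_IZR; intro E; apply eq_IZR in E.
  apply Z_Even_of_Even_square; destruct u as [[[a b] c] d]; unfold QDZ, QLZ, sum4 in *.
  exists (a * a + b * b + c * c + d * d - 2 * m)%Z; lia.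
Qed.

Lemma Even_sum4_of_QL u m : QL (toR4 u) = 2 * IZR m -> Z.Even (sum4 u).
Proof.
  rewrite QL_toR4, <- mult_IZR; intro E; apply eq_IZR in E.
  apply Z_Even_of_Even_square; destruct u as [[[a b] c] d]; unfold QDZ, QLZ, sum4 in *.
  exists (m + a * a + a * b + a * c + a * d + b * c + b * d + c * d)%Z; lia.
Qed.

Lemma bij_between_J0_int m :
  bij_between (fun v => is_int4 v /\ QD v = 4 * IZR m)
              (fun v => is_int4 v /\ QL v = 2 * IZR m) J0.
Proof.
  apply involution_bij_between; [exact J0K | |]; intros v [[u ->] Hv]; split.
  - exact (is_int4_J0 u (Even_sum4_of_QD u m Hv)).
  - rewrite QL_J0, Hv; field.
  - exact (is_int4_J0 u (Even_sum4_of_QL u m Hv)).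
  - rewrite QD_J0, Hv; ring.
Qed.

Lemma length_filter_le_of_inj {A : Type} (l : list A) (p q : A -> bool) (g : A -> A) :
  NoDup l ->
  (forall x, In x l -> p x = true -> In (g x) l /\ q (g x) = true) ->
  (forall x y, p x = true -> p y = true -> g x = g y -> x = y) ->
  (length (filter p l) <= length (filter q l))%nat.
Proof.
  intros Hl Hpq Hg. rewrite <- (length_map g).
  apply NoDup_incl_length.
  - apply NoDup_map_NoDup_ForallPairs; [|now apply NoDup_filter].
    intros x y Hx Hy. apply filter_In in Hx, Hy. apply Hg; tauto.
  - intros y Hy. apply in_map_iff in Hy as [x [<- Hx]]. apply filter_In in Hx.
    apply filter_In, Hpq; tauto.
Qed.

Lemma NoDup_flat_map_fibers {A B : Type} (f : A -> list B) (pi : B -> A) (l : list A) :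
  NoDup l -> (forall a, NoDup (f a)) -> (forall a x, In x (f a) -> pi x = a) ->
  NoDup (flat_map f l).
Proof.
  intros Hl Hf Hpi. induction Hl as [|a l Ha Hl IH]; simpl; [constructor|].
  apply NoDup_app; auto.
  intros x Hx Hx'. apply in_flat_map in Hx' as [a' [Ha' Hx']].
  apply Ha. now rewrite <- (Hpi a x Hx), (Hpi a' x Hx').
Qed.

Lemma NoDup_box_coords T : NoDup (box_coords T).
Proof.
  apply NoDup_map_NoDup_ForallPairs; [|apply seq_NoDup].
  intros x y _ _ E. lia.
Qed.

Lemma NoDup_box T : NoDup (box T).
Proof.
  pose proof (NoDup_box_coords T) as Hc.
  apply (NoDup_flat_map_fibers _ (fun '(a, _, _, _) => a)); auto.
  2:{ intros a x Hx. apply in_flat_map in Hx as [? [_ Hx]].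
      apply in_flat_map in Hx as [? [_ Hx]]. now apply in_map_iff in Hx as [? [<- _]]. }
  intro a. apply (NoDup_flat_map_fibers _ (fun '(_, b, _, _) => b)); auto.
  2:{ intros b x Hx. apply in_flat_map in Hx as [? [_ Hx]].
      now apply in_map_iff in Hx as [? [<- _]]. }
  intro b. apply (NoDup_flat_map_fibers _ (fun '(_, _, c, _) => c)); auto.
  2:{ intros c x Hx. now apply in_map_iff in Hx as [? [<- _]]. }
  intro c. apply NoDup_map_NoDup_ForallPairs; auto.
  intros x y _ _ E. congruence.
Qed.

Lemma in_box_coords T (a : Z) : Rabs (IZR a) <= T -> In a (box_coords T).
Proof.
  intro Ha. apply in_map_iff. exists (Z.to_nat (a + Z.abs (up T))).
  destruct (archimed T) as [HT _].
  assert (a < up T)%Z by (apply lt_IZR; pose proof (Rle_abs (IZR a)); lra).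
  assert (- a < up T)%Z.
  { apply lt_IZR; rewrite opp_IZR. pose proof (Rle_abs (- IZR a)).
    rewrite Rabs_Ropp in *; lra. }
  split; [lia | apply in_seq; lia].
Qed.

Lemma Rabs_le_sqrt (a s : R) : a ^ 2 <= s -> Rabs a <= sqrt s.
Proof.
  intro Hs. rewrite <- sqrt_Rsqr_abs. apply sqrt_le_1_alt. unfold Rsqr. lra.
Qed.

Lemma in_box u T : H (toR4 u) <= T -> In u (box T).
Proof.
  destruct u as [[[a b] c] d]; unfold H, toR4; intro HT.
  pose proof (pow2_ge_0 (IZR a)); pose proof (pow2_ge_0 (IZR b)).
  pose proof (pow2_ge_0 (IZR c)); pose proof (pow2_ge_0 (IZR d)).
  assert (Hc : forall e : Z, IZR e ^ 2 <= IZR a ^ 2 + IZR b ^ 2 + IZR c ^ 2 + IZR d ^ 2 ->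
                    In e (box_coords T)).
  { intros e He. apply in_box_coords. eapply Rle_trans; [apply Rabs_le_sqrt, He | exact HT]. }
  apply in_flat_map; exists a; split; [apply Hc; lra|].
  apply in_flat_map; exists b; split; [apply Hc; lra|].
  apply in_flat_map; exists c; split; [apply Hc; lra|].
  apply in_map_iff; exists d; split; [reflexivity | apply Hc; lra].
Qed.

Lemma Req_Rle_test_spec (a b h T : R) :
  (if Req_EM_T a b then if Rle_dec h T then true else false else false) = true <->
  a = b /\ h <= T.
Proof.
  destruct (Req_EM_T a b), (Rle_dec h T); split; intuition congruence.
Qed.

Lemma count_sol_le_J0 (Q1 Q2 : R4 -> R) (k1 k2 : Z) (T : R) :
  (forall u, Q1 (toR4 u) = IZR k1 -> Z.Even (sum4 u) /\ Q2 (J0 (toR4 u)) = IZR k2) ->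
  (count_sol Q1 k1 T <= count_sol Q2 k2 T)%nat.
Proof.
  intro HQ. apply length_filter_le_of_inj with (g := J0Z); [apply NoDup_box | |].
  - intros u _ Hu. apply Req_Rle_test_spec in Hu as [E HT].
    destruct (HQ u E) as [Hs E'].
    assert (HT' : H (toR4 (J0Z u)) <= T) by now rewrite toR4_J0Z, H_J0.
    split; [now apply in_box | apply Req_Rle_test_spec].
    split; [now rewrite toR4_J0Z | exact HT'].
  - intros x y Hx Hy E.
    apply Req_Rle_test_spec in Hx as [Ex _], Hy as [Ey _].
    apply (f_equal (fun u => J0 (toR4 u))) in E.
    rewrite (toR4_J0Z x), (toR4_J0Z y), !J0K in E by now apply HQ.
    now apply toR4_inj.
Qed.

Theorem lemma2p1 :
  (forall r : R,
     bij_between (fun v => QD v = 4 * r) (fun v => QL v = 2 * r) J0) /\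
  (forall v : R4, H (J0 v) = H v) /\
  (forall m : Z,
     bij_between (fun v => is_int4 v /\ QD v = 4 * IZR m)
                 (fun v => is_int4 v /\ QL v = 2 * IZR m) J0) /\
  (forall (m : Z) (T : R), 0 < T -> N_D (4 * m)%Z T = N_L (2 * m)%Z T).
Proof.
  split; [exact bij_between_J0|]. split; [exact H_J0|].
  split; [exact bij_between_J0_int|].
  intros m T _; apply Nat.le_antisymm; apply count_sol_le_J0; intros u Hu;
    rewrite mult_IZR in *.
  - split; [exact (Even_sum4_of_QD u m Hu) | rewrite QL_J0, Hu; field].
  - split; [exact (Even_sum4_of_QL u m Hu) | rewrite QD_J0, Hu; ring].
Qed.
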